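(* Let $(P,\leqslant)$ be a conditionally-complete poset and let $P^* := \{x \in P : \exists\, y \in P,\ y \ll x\}$, ordered by the restriction of $\leqslant$. Then for every directed subset $D$ of $P^*$ that is bounded above, the supremum of $D$ in $P^*$ exists and equals the supremum $\bigvee D$ of $D$ in $P$.
   Context: A poset is conditionally-complete if every nonempty subset bounded above has a supremum. A nonempty subset $D$ is directed if any two elements of $D$ have an upper bound in $D$. For $x,y \in P$, $x \ll y$ ($x$ way-below $y$) means: for every directed subset $D$ of $P$ bounded above with supremum $d_0$, $y \leqslant d_0$ implies $x \leqslant d$ for some $d \in D$. *)

From mathcomp Require Import all_boot all_order.
Set Implicit Arguments. Unset Strict Implicit. Unset Printing Implicit Defensive.
Import Order.TTheory.
Local Open Scope order_scope.

Section PosetDefs.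
Context {disp : Order.disp_t} {T : porderType disp}.

Definition upper_bound (A : T -> Prop) (x : T) : Prop := forall a, A a -> a <= x.

Definition bounded_above (A : T -> Prop) : Prop := exists x, upper_bound A x.

Definition is_sup (A : T -> Prop) (s : T) : Prop :=
  upper_bound A s /\ forall u, upper_bound A u -> s <= u.

Definition is_sup_in (S A : T -> Prop) (s : T) : Prop :=
  S s /\ upper_bound A s /\ forall u, S u -> upper_bound A u -> s <= u.

Definition cond_complete : Prop :=
  forall A : T -> Prop, (exists a, A a) -> bounded_above A -> exists s, is_sup A s.

Definition directed (A : T -> Prop) : Prop :=
  (exists a, A a) /\
  forall x y, A x -> A y -> exists z, A z /\ x <= z /\ y <= z.

Definition way_below (x y : T) : Prop :=
  forall (D : T -> Prop) (d0 : T), directed D -> bounded_above D -> is_sup D d0 ->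
    y <= d0 -> exists d, D d /\ x <= d.

Definition Pstar (x : T) : Prop := exists y, way_below y x.

End PosetDefs.

(* P^* is an upper set, since [y << x <= z] implies [y << z]; so the supremum
   of D in P, which lies above any element of D, belongs to P^* and is a
   fortiori the least upper bound among elements of P^*. *)
From mathcomp Require Import all_boot all_order.
Import Order.TTheory.
Local Open Scope order_scope.

Section Pstar.
Context {disp : Order.disp_t} {T : porderType disp}.

Lemma way_below_le_trans (x y z : T) : way_below x y -> y <= z -> way_below x z.
Proof.
move=> wxy yz D d0 dirD bD supD zd0.
exact: wxy dirD bD supD (le_trans yz zd0).
Qed.

Lemma Pstar_le (x y : T) : Pstar x -> x <= y -> Pstar y.
Proof. by move=> [w wx] xy; exists w; exact: way_below_le_trans xy. Qed.

Lemma is_sup_in_of_is_sup (S A : T -> Prop) (s : T) :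
  S s -> is_sup A s -> is_sup_in S A s.
Proof. by move=> Ss [ubs leastS]; split=> //; split=> // u _; apply: leastS. Qed.

End Pstar.

Theorem corollary2p2 (disp : Order.disp_t) (T : porderType disp) :
  cond_complete (T := T) ->
  forall D : T -> Prop,
    (forall x, D x -> Pstar x) ->
    directed D ->
    (exists u, Pstar u /\ upper_bound D u) ->
    exists s, is_sup_in Pstar D s /\ is_sup D s.
Proof.
move=> cc D DP [[d Dd] _] [u [_ ubu]].
have [s supDs] := cc D (ex_intro _ d Dd) (ex_intro _ u ubu).
have Ps : Pstar s by apply: Pstar_le (DP d Dd) (supDs.1 d Dd).
by exists s; split=> //; apply: is_sup_in_of_is_sup.
Qed.
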